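(* Let $n_i\le r_i$ ($i=1,2$) be nonnegative integers and let $(X_{1,1},\dots,X_{1,n_1},X_{2,1},\dots,X_{2,n_2})$ be $\{0,1\}$-valued and $(n_1,n_2)$-DFPE, with associated point $w=(w_{l_1,l_2})_{(l_1,l_2)\ne(0,0),\,0\le l_i\le n_i}$. Then the sequence is $(r_1,r_2)$-extendible if and only if $w\in\operatorname{conv}\{\lambda^{(n_1,n_2)}_{k_1,k_2;\,r_1,r_2}:0\le k_1\le r_1,\ 0\le k_2\le r_2\}$.
   Context: A family $(X_{1,1},\dots,X_{1,n_1},X_{2,1},\dots,X_{2,n_2})$ of random variables is $(n_1,n_2)$-DFPE (partially exchangeable in the sense of de Finetti) if its joint law is invariant under any permutation of the indices $1,\dots,n_1$ of the first group together with any permutation of the indices $1,\dots,n_2$ of the second group. For such a $\{0,1\}$-valued family set $w_{l_1,l_2}=P(X_{1,1}=\dots=X_{1,l_1}=1,\ X_{2,1}=\dots=X_{2,l_2}=1)$ for $0\le l_i\le n_i$. The family is $(r_1,r_2)$-extendible ($r_i\ge n_i$) if there is an $(r_1,r_2)$-DFPE $\{0,1\}$-valued family $(Y_{1,1},\dots,Y_{1,r_1},Y_{2,1},\dots,Y_{2,r_2})$ such that $(Y_{1,1},\dots,Y_{1,n_1},Y_{2,1},\dots,Y_{2,n_2})$ has the same law as the original family. For integers $m$ and $k\ge0$, $(m)_k=m(m-1)\cdots(m-k+1)$, $(m)_0=1$. For $0\le k_i\le r_i$, $\lambda^{(n_1,n_2)}_{k_1,k_2;\,r_1,r_2}$ is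 the point with the same coordinate indexing as $w$ whose $(l_1,l_2)$-coordinate is $\dfrac{(k_1)_{l_1}(k_2)_{l_2}}{(r_1)_{l_1}(r_2)_{l_2}}$. *)

From HB Require Import structures.
From mathcomp Require Import all_boot all_order all_algebra all_fingroup.
Set Implicit Arguments. Unset Strict Implicit. Unset Printing Implicit Defensive.
Import Order.TTheory GRing.Theory Num.Theory.
Local Open Scope ring_scope.

(* Outcomes of a {0,1}-valued family (X_{1,1..n1}, X_{2,1..n2}):
   a pair of boolean vectors (true = 1). *)
Definition outcome (n1 n2 : nat) : finType :=
  ({ffun 'I_n1 -> bool} * {ffun 'I_n2 -> bool})%type.

Definition is_law (R : realFieldType) (n1 n2 : nat) (p : outcome n1 n2 -> R) :=
  (forall x, 0 <= p x) /\ \sum_(x : outcome n1 n2) p x = 1.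

Definition permute_outcome (n1 n2 : nat) (s1 : 'S_n1) (s2 : 'S_n2)
  (x : outcome n1 n2) : outcome n1 n2 :=
  ([ffun i => x.1 (s1 i)], [ffun j => x.2 (s2 j)]).

Definition DFPE (R : realFieldType) (n1 n2 : nat) (p : outcome n1 n2 -> R) :=
  forall (s1 : 'S_n1) (s2 : 'S_n2) (x : outcome n1 n2),
    p (permute_outcome s1 s2 x) = p x.

(* w_{l1,l2} = P(X_{1,1}=..=X_{1,l1}=1, X_{2,1}=..=X_{2,l2}=1) *)
Definition wcoord (R : realFieldType) (n1 n2 : nat) (p : outcome n1 n2 -> R)
  (l1 l2 : nat) : R :=
  \sum_(x : outcome n1 n2 |
        [forall i : 'I_n1, (i < l1)%N ==> x.1 i] &&
        [forall j : 'I_n2, (j < l2)%N ==> x.2 j]) p x.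

Definition restricts (n1 n2 r1 r2 : nat) (y : outcome r1 r2) (x : outcome n1 n2)
  : bool :=
  [forall i : 'I_n1, forall j : 'I_r1, (i == j :> nat) ==> (y.1 j == x.1 i)] &&
  [forall i : 'I_n2, forall j : 'I_r2, (i == j :> nat) ==> (y.2 j == x.2 i)].

Definition extendible (R : realFieldType) (n1 n2 r1 r2 : nat)
  (p : outcome n1 n2 -> R) :=
  exists q : outcome r1 r2 -> R,
    [/\ is_law q, DFPE q &
        forall x : outcome n1 n2, p x = \sum_(y : outcome r1 r2 | restricts y x) q y].

Definition lambda_coord (R : realFieldType) (r1 r2 k1 k2 l1 l2 : nat) : R :=
  ((k1 ^_ l1)%:R * (k2 ^_ l2)%:R) / ((r1 ^_ l1)%:R * (r2 ^_ l2)%:R).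

Definition in_conv_lambda (R : realFieldType) (n1 n2 r1 r2 : nat)
  (w : nat -> nat -> R) :=
  exists c : 'I_r1.+1 -> 'I_r2.+1 -> R,
    [/\ forall k1 k2, 0 <= c k1 k2,
        \sum_(k1 < r1.+1) \sum_(k2 < r2.+1) c k1 k2 = 1 &
        forall l1 l2 : nat, (l1 <= n1)%N -> (l2 <= n2)%N -> (l1, l2) <> (0%N, 0%N) ->
          w l1 l2 = \sum_(k1 < r1.+1) \sum_(k2 < r2.+1)
                      c k1 k2 * lambda_coord R r1 r2 k1 k2 l1 l2].

From HB Require Import structures.
From mathcomp Require Import all_boot all_order all_algebra all_fingroup.
From mathcomp Require Import zify.
Set Implicit Arguments. Unset Strict Implicit. Unset Printing Implicit Defensive.
Import GRing.Theory Num.Theory.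

(* An (r1,r2)-outcome falls in the class C(k1,k2) when it has k1 ones in the
   first group and k2 in the second.  Two boolean vectors with the same number
   of ones differ by a permutation, so DFPE laws are exactly the laws that are
   constant on classes.  For such a law q, the outcomes of C(k1,k2) whose first
   l1, resp. l2, coordinates are ones form the fraction
   C(r1-l1,k1-l1) C(r2-l2,k2-l2) / (C(r1,k1) C(r2,k2)) = lambda_{k1,k2}(l1,l2)
   of the class (a hypergeometric count), hence
       w_{l1,l2}(q) = sum_{k1,k2} q(C(k1,k2)) lambda_{k1,k2}(l1,l2).
   Marginalizing to the first (n1,n2) coordinates preserves DFPE and the
   coordinates w_{l1,l2} with l_i <= n_i.  Finally the lambda points with
   k_i <= n_i form a triangular system with nonzero diagonal, so a
   class-constant law on (n1,n2)-outcomes is determined by its w-coordinates.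
   The theorem follows: the class masses of an extension are convex weights
   for w; conversely, spreading given convex weights uniformly over the
   classes yields a DFPE law whose marginal has the w-coordinates of p, hence
   is p. *)

Definition ones m (y : {ffun 'I_m -> bool}) : nat := #|[set i | y i]|.

Definition permute_vec m (s : 'S_m) (y : {ffun 'I_m -> bool}) : {ffun 'I_m -> bool} :=
  [ffun i => y (s i)].

Lemma ones_le m (y : {ffun 'I_m -> bool}) : ones y <= m.
Proof. by rewrite /ones -[leqRHS](card_ord m) max_card. Qed.

Lemma ones_count m (y : {ffun 'I_m -> bool}) : ones y = count y (enum 'I_m).
Proof.
rewrite /ones -sum1_count -sum1_card big_enum_cond /=.
by apply: eq_bigl => i; rewrite inE.
Qed.

Lemma ones_permute m (s : 'S_m) (y : {ffun 'I_m -> bool}) :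
  ones (permute_vec s y) = ones y.
Proof.
rewrite /ones -[RHS](card_preimset _ (@perm_inj _ s)).
by apply: eq_card => i; rewrite !inE ffunE.
Qed.

Lemma perm_eq_bool (s t : seq bool) :
  size s = size t -> count id s = count id t -> perm_eq s t.
Proof.
move=> eq_size eq_true; apply/seq.permP => a.
have count_false u : count negb u = size u - count id u.
  by rewrite -(count_predC id u) addKn.
case aT: (a true); case aF: (a false).
- by rewrite !(@eq_count _ a predT) ?count_predT // => -[].
- by rewrite !(@eq_count _ a id) // => -[].
- by rewrite !(@eq_count _ a negb) ?count_false ?eq_size ?eq_true // => -[].
- by rewrite !(@eq_count _ a pred0) ?count_pred0 // => -[].
Qed.

Lemma ones_eq_permute m (y y' : {ffun 'I_m -> bool}) :
  ones y = ones y' -> exists s : 'S_m, y' = permute_vec s y.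
Proof.
move=> eq_ones.
have /tuple_permP[s eq_tuples] : perm_eq [tuple y' i | i < m] [tuple y i | i < m].
  apply: perm_eq_bool; first by rewrite !size_tuple.
  by rewrite /= !count_map -enumT; move: eq_ones; rewrite !ones_count.
exists s; apply/ffunP => i; rewrite ffunE.
have := congr1 (fun t : m.-tuple bool => tnth t i) (val_inj eq_tuples).
by rewrite !tnth_mktuple.
Qed.

(* Number of [k]-subsets of a finite type containing a given set [P]:
   such a set is [P] together with a [(k - #|P|)]-subset of [~: P]. *)
Lemma card_supersets (T : finType) (P : {set T}) k :
  #|[set A : {set T} | (#|A| == k) && (P \subset A)]| =
  if #|P| <= k then 'C(#|T| - #|P|, k - #|P|) else 0.
Proof.
case: leqP => [leP | ltP]; last first.
  apply: eq_card0 => A; rewrite !inE; apply/negbTE/negP => /andP[/eqP cardA sPA].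
  by have := subset_leq_card sPA; rewrite cardA leqNgt ltP.
pose fresh := [set B : {set T} | (B \subset ~: P) && (#|B| == k - #|P|)].
have notinP (B : {set T}) x : B \subset ~: P -> x \in P -> (x \in B) = false.
  by move=> sBP xP; apply/negbTE/negP => /(subsetP sBP); rewrite inE xP.
have -> : [set A : {set T} | (#|A| == k) && (P \subset A)] = [set B :|: P | B in fresh].
  apply/setP => A; rewrite inE; apply/idP/imsetP.
  - case/andP => /eqP cardA sPA; exists (A :\: P).
      rewrite inE (cardsDS sPA) cardA eqxx andbT.
      by apply/subsetP => x; rewrite !inE => /andP[].
    apply/setP => x; rewrite !inE; case xP: (x \in P); rewrite ?orbT ?orbF //.
    exact: (subsetP sPA).
  - case=> B; rewrite inE => /andP[sBP /eqP cardB] ->.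
    have BIP : B :&: P = set0.
      by apply/setP => x; rewrite !inE; case xP: (x \in P); rewrite ?andbF ?(notinP B).
    have := cardsUI B P; rewrite BIP cards0 addn0 cardB subnK // => ->.
    by rewrite eqxx subsetUr.
rewrite card_in_imset; last first.
  move=> B1 B2; rewrite !inE => /andP[sB1 _] /andP[sB2 _] eqU; apply/setP => x.
  have := congr1 (fun A : {set T} => x \in A) eqU; rewrite !inE /=.
  case xP: (x \in P); last by rewrite !orbF.
  by rewrite (notinP B1) // (notinP B2).
by rewrite cards_draws -(cardsC P) addKn.
Qed.

(* A boolean function on a finite type is the indicator of a set, so counting
   functions amounts to counting sets. *)
Lemma card_ffun_bool (T : finType) (Q : {set T} -> bool) :
  #|[set y : {ffun T -> bool} | Q [set i | y i]]| = #|[set A : {set T} | Q A]|.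
Proof.
have support_inj : injective (fun y : {ffun T -> bool} => [set i | y i]).
  move=> y y' eq_supp; apply/ffunP => i.
  by have := congr1 (fun A : {set T} => i \in A) eq_supp; rewrite !inE.
rewrite -(card_imset _ support_inj); apply: eq_card => A; apply/imsetP/idP.
- by case=> y; rewrite !inE => Qy ->.
- rewrite inE => QA; exists [ffun i => i \in A].
    by rewrite inE; congr Q: QA; apply/setP => i; rewrite !inE ffunE.
  by apply/setP => i; rewrite !inE ffunE.
Qed.

Definition initial_segment m l : {set 'I_m} := [set i : 'I_m | i < l].

Lemma card_initial_segment m l : l <= m -> #|initial_segment m l| = l.
Proof.
move=> le_lm; have widen_inj : injective (widen_ord le_lm).
  by move=> i j /(congr1 val) /= eq_ij; apply: val_inj.
rewrite -[RHS](card_ord l) -(card_imset _ widen_inj).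
apply: eq_card => i; rewrite inE; apply/idP/imsetP => [lt_il | [j _ ->]] //=.
by exists (Ordinal lt_il) => //; apply: val_inj.
Qed.

Definition prefix_ones m l (y : {ffun 'I_m -> bool}) : bool :=
  [forall i : 'I_m, (i < l) ==> y i].

Lemma prefix_onesE m l (y : {ffun 'I_m -> bool}) :
  prefix_ones l y = (initial_segment m l \subset [set i | y i]).
Proof.
apply/forallP/subsetP => [pre_y i | sub_y i].
- by rewrite !inE => /(implyP (pre_y i)).
- by apply/implyP => lt_il; have := sub_y i; rewrite !inE; apply.
Qed.

Lemma prefix_ones0 m (y : {ffun 'I_m -> bool}) : prefix_ones 0 y.
Proof. exact/forallP. Qed.

Definition nb_prefix m k l : nat := if l <= k then 'C(m - l, k - l) else 0.

(* Via indicators, such vectors correspond to the k-supersets of {0..l-1}. *)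
Lemma card_ones_prefix m k l : l <= m ->
  #|[set y : {ffun 'I_m -> bool} | (ones y == k) && prefix_ones l y]| = nb_prefix m k l.
Proof.
move=> le_lm.
transitivity #|[set A : {set 'I_m} | (#|A| == k) && (initial_segment m l \subset A)]|.
  rewrite -(card_ffun_bool (fun A => (#|A| == k) && (initial_segment m l \subset A))).
  by apply: eq_card => y; rewrite !inE prefix_onesE.
by rewrite card_supersets card_initial_segment // card_ord.
Qed.

Lemma nb_prefix0 m k : nb_prefix m k 0 = 'C(m, k).
Proof. by rewrite /nb_prefix leq0n !subn0. Qed.

(* Falling factorials compose: taking l, then k - l more, is taking k. *)
Lemma ffact_split m l k : l <= k -> k <= m -> m ^_ l * (m - l) ^_ (k - l) = m ^_ k.
Proof.
move=> le_lk le_km; have sub_eq : (m - l) - (k - l) = m - k by lia.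
apply/eqP; rewrite -(eqn_pmul2r (fact_gt0 (m - k))) -mulnA -{1}sub_eq.
by rewrite !ffact_fact ?leq_sub2r // (leq_trans le_lk le_km).
Qed.

(* The hypergeometric identity  nb_prefix m k l * m^_l = C(m, k) * k^_l : both
   sides count pairs (k-subset, injective listing of l of its elements). *)
Lemma nb_prefix_ffact m k l : k <= m -> nb_prefix m k l * m ^_ l = 'C(m, k) * k ^_ l.
Proof.
rewrite /nb_prefix => le_km; case: leqP => [le_lk | lt_kl]; last first.
  by rewrite mul0n ffact_small // muln0.
apply/eqP; rewrite -(eqn_pmul2r (fact_gt0 (k - l))) mulnAC bin_ffact mulnC.
by rewrite ffact_split // -mulnA ffact_fact // bin_ffact.
Qed.

Local Open Scope ring_scope.

Lemma nb_prefix_ratio (R : realFieldType) m k l : (k <= m)%N -> (l <= m)%N ->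
  (nb_prefix m k l)%:R / 'C(m, k)%:R = (k ^_ l)%:R / (m ^_ l)%:R :> R.
Proof.
move=> le_km le_lm.
apply/eqP; rewrite eqr_div ?pnatr_eq0 -?lt0n ?bin_gt0 ?ffact_gt0 //.
by rewrite -!natrM nb_prefix_ffact // mulnC.
Qed.

Definition in_class r1 r2 (k1 k2 : nat) (y : outcome r1 r2) : bool :=
  (ones y.1 == k1) && (ones y.2 == k2).

Definition class_constant (R : realFieldType) r1 r2 (q : outcome r1 r2 -> R) : Prop :=
  forall y y', ones y.1 = ones y'.1 -> ones y.2 = ones y'.2 -> q y = q y'.

Definition class_mass (R : realFieldType) r1 r2 (q : outcome r1 r2 -> R) (k1 k2 : nat) : R :=
  \sum_(y | in_class k1 k2 y) q y.

Lemma DFPE_class_constant (R : realFieldType) r1 r2 (q : outcome r1 r2 -> R) :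
  DFPE q -> class_constant q.
Proof.
move=> qD y y' /ones_eq_permute[s1 eq1] /ones_eq_permute[s2 eq2].
have -> : y' = permute_outcome s1 s2 y by case: y' eq1 eq2 => y1' y2' /= -> ->.
by rewrite qD.
Qed.

Lemma class_constant_DFPE (R : realFieldType) r1 r2 (q : outcome r1 r2 -> R) :
  class_constant q -> DFPE q.
Proof. by move=> qC s1 s2 y; apply: qC; apply: ones_permute. Qed.

Lemma sum_by_class (R : realFieldType) r1 r2 (q : outcome r1 r2 -> R) :
  \sum_y q y = \sum_(k1 < r1.+1) \sum_(k2 < r2.+1) class_mass q k1 k2.
Proof.
rewrite pair_big /= (partition_big (fun y : outcome r1 r2 =>
   (inord (ones y.1) : 'I_r1.+1, inord (ones y.2) : 'I_r2.+1)) xpredT) //.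
apply: eq_bigr => -[k1 k2] _; apply: eq_bigl => y /=.
by rewrite /in_class xpair_eqE -!(inj_eq val_inj) /= !inordK // ltnS ones_le.
Qed.

Lemma card_class_prefix r1 r2 k1 k2 l1 l2 : (l1 <= r1)%N -> (l2 <= r2)%N ->
  #|[pred y : outcome r1 r2 | in_class k1 k2 y && (prefix_ones l1 y.1 && prefix_ones l2 y.2)]|
  = (nb_prefix r1 k1 l1 * nb_prefix r2 k2 l2)%N.
Proof.
move=> le_lr1 le_lr2; rewrite -!card_ones_prefix // -cardsX.
by apply: eq_card => y; rewrite !inE andbACA.
Qed.

Lemma card_class r1 r2 k1 k2 :
  #|[pred y : outcome r1 r2 | in_class k1 k2 y]| = ('C(r1, k1) * 'C(r2, k2))%N.
Proof.
rewrite -!nb_prefix0 -card_class_prefix //; apply: eq_card => y.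
by rewrite !inE !prefix_ones0 !andbT.
Qed.

Lemma sum_in_class (R : realFieldType) r1 r2 (q : outcome r1 r2 -> R) k1 k2 y0
    (P : pred (outcome r1 r2)) :
  class_constant q -> in_class k1 k2 y0 -> (forall y, P y -> in_class k1 k2 y) ->
  \sum_(y | P y) q y = q y0 *+ #|[pred y | P y]|.
Proof.
move=> qC /andP[/eqP ones1 /eqP ones2] P_class; rewrite -sumr_const.
apply: eq_bigr => y /P_class /andP[/eqP e1 /eqP e2].
by apply: qC; rewrite ?e1 ?e2.
Qed.

Lemma class_mass_prefix (R : realFieldType) r1 r2 (q : outcome r1 r2 -> R) k1 k2 l1 l2 :
  class_constant q -> (l1 <= r1)%N -> (l2 <= r2)%N ->
  \sum_(y | in_class k1 k2 y && (prefix_ones l1 y.1 && prefix_ones l2 y.2)) q y =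
  class_mass q k1 k2 * lambda_coord R r1 r2 k1 k2 l1 l2.
Proof.
move=> qC le_lr1 le_lr2.
case: (pickP (fun y : outcome r1 r2 => in_class k1 k2 y)) => [y0 y0_class | class0]; last first.
  by rewrite /class_mass !big_pred0 ?mul0r // => y; rewrite class0.
rewrite /class_mass (sum_in_class qC y0_class); last by move=> y /andP[].
rewrite (sum_in_class qC y0_class); last by [].
rewrite (card_class_prefix _ _ le_lr1 le_lr2) card_class.
rewrite -[LHS]mulr_natr -[X in _ = X * _]mulr_natr -mulrA; congr (_ * _).
have /andP[/eqP <- /eqP <-] := y0_class.
have binC_neq0 m (y : {ffun 'I_m -> bool}) : 'C(m, ones y)%:R != 0 :> R.
  by rewrite pnatr_eq0 -lt0n bin_gt0 ones_le.
rewrite /lambda_coord !natrM -mulf_div -!nb_prefix_ratio ?ones_le //.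
by rewrite mulrACA ![_%:R * (_ / _)]mulrC !divfK.
Qed.

Lemma wcoord_class_constant (R : realFieldType) r1 r2 (q : outcome r1 r2 -> R) l1 l2 :
  class_constant q -> (l1 <= r1)%N -> (l2 <= r2)%N ->
  wcoord q l1 l2 = \sum_(k1 < r1.+1) \sum_(k2 < r2.+1)
                     class_mass q k1 k2 * lambda_coord R r1 r2 k1 k2 l1 l2.
Proof.
move=> qC le_lr1 le_lr2; rewrite /wcoord big_mkcond sum_by_class.
apply: eq_bigr => k1 _; apply: eq_bigr => k2 _.
by rewrite /class_mass -big_mkcondr class_mass_prefix.
Qed.

Lemma wcoord00 (R : realFieldType) n1 n2 (p : outcome n1 n2 -> R) :
  wcoord p 0 0 = \sum_x p x.
Proof. by apply: eq_bigl => x; apply/andP; split; apply: prefix_ones0. Qed.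

Definition extend_perm_fun n r (le_nr : (n <= r)%N) (s : 'S_n) (i : 'I_r) : 'I_r :=
  if insub (val i) : option 'I_n is Some j then widen_ord le_nr (s j) else i.

Lemma extend_perm_fun_inj n r (le_nr : (n <= r)%N) (s : 'S_n) :
  injective (extend_perm_fun le_nr s).
Proof.
move=> i j; rewrite /extend_perm_fun.
case: insubP => [i' _ val_i | lei]; case: insubP => [j' _ val_j | lej] //.
- move/(congr1 val) => /= /val_inj /perm_inj eq_ij.
  by apply: val_inj; rewrite -val_i -val_j eq_ij.
- by move=> eq_ij; rewrite -eq_ij /= ltn_ord in lej.
- by move=> eq_ij; rewrite eq_ij /= ltn_ord in lei.
Qed.

Definition extend_perm n r (le_nr : (n <= r)%N) (s : 'S_n) : 'S_r :=
  perm (@extend_perm_fun_inj n r le_nr s).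

Lemma extend_perm_widen n r (le_nr : (n <= r)%N) (s : 'S_n) (i : 'I_n) :
  extend_perm le_nr s (widen_ord le_nr i) = widen_ord le_nr (s i).
Proof.
rewrite permE /extend_perm_fun; case: insubP => [j _ val_j | ]; last by rewrite /= ltn_ord.
by congr (widen_ord _ (s _)); apply: val_inj.
Qed.

Lemma permute_outcome_inj n1 n2 (s1 : 'S_n1) (s2 : 'S_n2) :
  injective (permute_outcome s1 s2).
Proof.
apply: (can_inj (g := permute_outcome s1^-1 s2^-1)) => -[y1 y2].
by congr pair; apply/ffunP => i; rewrite !ffunE permKV.
Qed.

Definition marginal (R : realFieldType) n1 n2 r1 r2 (q : outcome r1 r2 -> R)
  (x : outcome n1 n2) : R :=
  \sum_(y | restricts y x) q y.

Section Restriction.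

Variables (n1 n2 r1 r2 : nat) (le_nr1 : (n1 <= r1)%N) (le_nr2 : (n2 <= r2)%N).

Definition restrict (y : outcome r1 r2) : outcome n1 n2 :=
  ([ffun i => y.1 (widen_ord le_nr1 i)], [ffun j => y.2 (widen_ord le_nr2 j)]).

Lemma restrictsE (y : outcome r1 r2) (x : outcome n1 n2) : restricts y x = (x == restrict y).
Proof.
rewrite /restricts; apply/andP/eqP => [[/forallP eq1 /forallP eq2] | ->].
- case: x eq1 eq2 => x1 x2 /= eq1 eq2; congr pair; apply/ffunP => i; rewrite ffunE.
  + by have /implyP/(_ (eqxx _))/eqP := forallP (eq1 i) (widen_ord le_nr1 i).
  + by have /implyP/(_ (eqxx _))/eqP := forallP (eq2 i) (widen_ord le_nr2 i).
- split; apply/forallP => i; apply/forallP => j; apply/implyP => /eqP eq_ij; rewrite /= ffunE.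
  + by have -> : j = widen_ord le_nr1 i by apply: val_inj.
  + by have -> : j = widen_ord le_nr2 i by apply: val_inj.
Qed.

Lemma prefix_ones_widen m r (le_mr : (m <= r)%N) l (y : {ffun 'I_r -> bool}) :
  (l <= m)%N -> prefix_ones l [ffun i => y (widen_ord le_mr i)] = prefix_ones l y.
Proof.
move=> le_lm; apply/forallP/forallP => pre_y i; apply/implyP => lt_il.
- have lt_im : (i < m)%N by apply: leq_trans le_lm.
  have := implyP (pre_y (Ordinal lt_im)) lt_il; rewrite ffunE.
  by have -> : widen_ord le_mr (Ordinal lt_im) = i by apply: val_inj.
- by rewrite ffunE; exact: (implyP (pre_y (widen_ord le_mr i)) lt_il).
Qed.

Lemma wcoord_marginal (R : realFieldType) (q : outcome r1 r2 -> R) l1 l2 :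
  (l1 <= n1)%N -> (l2 <= n2)%N ->
  wcoord (marginal q : outcome n1 n2 -> R) l1 l2 = wcoord q l1 l2.
Proof.
move=> le_ln1 le_ln2; rewrite /wcoord /marginal.
under eq_bigr do under eq_bigl do rewrite restrictsE.
rewrite (exchange_big_dep xpredT) //= [RHS]big_mkcond; apply: eq_bigr => y _.
rewrite (eq_bigl (fun x => (prefix_ones l1 y.1 && prefix_ones l2 y.2) && (x == restrict y))).
  by rewrite big_mkcondl big_pred1_eq.
move=> x; case: eqP => [-> | _]; rewrite ?andbF ?andbT //.
by congr andb; apply: prefix_ones_widen.
Qed.

Lemma restrict_permute (s1 : 'S_n1) (s2 : 'S_n2) (y : outcome r1 r2) :
  restrict (permute_outcome (extend_perm le_nr1 s1) (extend_perm le_nr2 s2) y) =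
  permute_outcome s1 s2 (restrict y).
Proof. by congr pair; apply/ffunP => i; rewrite !ffunE extend_perm_widen. Qed.

(* The marginal of a partially exchangeable law is partially exchangeable:
   a permutation of the first coordinates extends to all coordinates. *)
Lemma DFPE_marginal (R : realFieldType) (q : outcome r1 r2 -> R) :
  DFPE q -> DFPE (marginal q : outcome n1 n2 -> R).
Proof.
move=> qD s1 s2 x; rewrite /marginal; under eq_bigl do rewrite restrictsE.
under [RHS]eq_bigl do rewrite restrictsE.
rewrite (reindex_inj (@permute_outcome_inj _ _ (extend_perm le_nr1 s1) (extend_perm le_nr2 s2))).
apply: eq_big => [y | y _]; last by rewrite qD.
by rewrite restrict_permute (inj_eq (@permute_outcome_inj _ _ s1 s2)).
Qed.

End Restriction.

Lemma lambda_coord_below (R : realFieldType) r1 r2 k1 k2 l1 l2 :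
  (k1 < l1)%N || (k2 < l2)%N -> lambda_coord R r1 r2 k1 k2 l1 l2 = 0.
Proof. by case/orP => lt_kl; rewrite /lambda_coord (ffact_small lt_kl) ?mul0r ?mulr0 ?mul0r. Qed.

Lemma lambda_coord_diag (R : realFieldType) r1 r2 k1 k2 :
  (k1 <= r1)%N -> (k2 <= r2)%N -> lambda_coord R r1 r2 k1 k2 k1 k2 != 0.
Proof.
move=> le_kr1 le_kr2; rewrite /lambda_coord -!natrM mulf_neq0 ?invr_eq0 ?pnatr_eq0 //.
  by rewrite -lt0n muln_gt0 !ffact_gt0 !leqnn.
by rewrite -lt0n muln_gt0 !ffact_gt0 le_kr1 le_kr2.
Qed.

(* The lambda points indexed by [0,n1] x [0,n2], read at the coordinates of
   the same range, form a triangular system with nonzero diagonal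
   (lambda_k(l) = 0 unless l <= k componentwise); hence they are linearly
   independent. *)
Lemma lambda_independent (R : realFieldType) n1 n2 (d : nat -> nat -> R) :
  (forall l1 l2, (l1 <= n1)%N -> (l2 <= n2)%N ->
     \sum_(k1 < n1.+1) \sum_(k2 < n2.+1) d k1 k2 * lambda_coord R n1 n2 k1 k2 l1 l2 = 0) ->
  forall k1 k2, (k1 <= n1)%N -> (k2 <= n2)%N -> d k1 k2 = 0.
Proof.
move=> comb0.
suff by_dist e k1 k2 : (k1 <= n1)%N -> (k2 <= n2)%N ->
    ((n1 - k1) + (n2 - k2) < e)%N -> d k1 k2 = 0.
  by move=> k1 k2 le_kn1 le_kn2; apply: (by_dist ((n1 - k1) + (n2 - k2)).+1).
elim: e k1 k2 => [// | e IH] k1 k2 le_kn1 le_kn2 lt_dist.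
have := comb0 k1 k2 le_kn1 le_kn2.
rewrite pair_big /= (bigD1 (inord k1, inord k2)) //= big1 ?addr0 => [|[j1 j2] /= ne_jk].
  rewrite !inordK ?ltnS // => /eqP; rewrite mulf_eq0 (negbTE (lambda_coord_diag _ _ _)) //.
  by rewrite orbF => /eqP.
have [lt_jk | ] := boolP ((j1 < k1)%N || (j2 < k2)%N).
  by rewrite lambda_coord_below // mulr0.
rewrite negb_or -!leqNgt => /andP[le_kj1 le_kj2].
have le_jn1 : (j1 <= n1)%N by rewrite -ltnS.
have le_jn2 : (j2 <= n2)%N by rewrite -ltnS.
rewrite IH ?mul0r //.
move: ne_jk; rewrite xpair_eqE negb_and -!(inj_eq val_inj) /= !inordK ?ltnS //.
by case/orP => /eqP ne; lia.
Qed.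

(* A class-constant function on (n1,n2)-outcomes is determined by its
   w-coordinates: by [wcoord_class_constant] and [lambda_independent] they
   determine the class masses, hence the values. *)
Lemma class_constant_wcoord_inj (R : realFieldType) n1 n2 (p p' : outcome n1 n2 -> R) :
  class_constant p -> class_constant p' ->
  (forall l1 l2, (l1 <= n1)%N -> (l2 <= n2)%N -> wcoord p l1 l2 = wcoord p' l1 l2) ->
  p =1 p'.
Proof.
move=> pC p'C eq_w x.
pose d k1 k2 := class_mass p k1 k2 - class_mass p' k1 k2.
have d0 : d (ones x.1) (ones x.2) = 0.
  apply: (@lambda_independent R n1 n2) => [l1 l2 le_ln1 le_ln2 | |]; rewrite ?ones_le //.
  under eq_bigr do under eq_bigr do rewrite mulrBl.
  under eq_bigr do rewrite sumrB.
  by rewrite sumrB -!wcoord_class_constant // eq_w // subrr.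
have class_x : in_class (ones x.1) (ones x.2) x by rewrite /in_class !eqxx.
move/eqP: d0; rewrite subr_eq0 /class_mass.
rewrite (sum_in_class pC class_x) ?(sum_in_class p'C class_x) // card_class => /eqP.
by apply: pmulrnI; rewrite muln_gt0 !bin_gt0 !ones_le.
Qed.

Section Spread.

Variables (R : realFieldType) (r1 r2 : nat) (c : 'I_r1.+1 -> 'I_r2.+1 -> R).

Definition spread (y : outcome r1 r2) : R :=
  c (inord (ones y.1)) (inord (ones y.2)) / ('C(r1, ones y.1) * 'C(r2, ones y.2))%:R.

Lemma spread_class_constant : class_constant spread.
Proof. by move=> y y' eq1 eq2; rewrite /spread eq1 eq2. Qed.

Lemma class_mass_spread (k1 : 'I_r1.+1) (k2 : 'I_r2.+1) : class_mass spread k1 k2 = c k1 k2.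
Proof.
rewrite /class_mass (eq_bigr (fun=> c k1 k2 / ('C(r1, k1) * 'C(r2, k2))%:R)); last first.
  by move=> y /andP[/eqP ones1 /eqP ones2]; rewrite /spread ones1 ones2 !inord_val.
have binC_neq0 : ('C(r1, k1) * 'C(r2, k2))%:R != 0 :> R.
  by rewrite pnatr_eq0 -lt0n muln_gt0 !bin_gt0 -ltnS ltn_ord -ltnS ltn_ord.
by rewrite sumr_const card_class -[LHS]mulr_natr divfK.
Qed.

Lemma spread_law :
  (forall k1 k2, 0 <= c k1 k2) -> \sum_(k1 < r1.+1) \sum_(k2 < r2.+1) c k1 k2 = 1 ->
  is_law spread.
Proof.
move=> c_ge0 c_sum1; split=> [y | ]; first by rewrite divr_ge0 ?ler0n.
rewrite sum_by_class -c_sum1; apply: eq_bigr => k1 _; apply: eq_bigr => k2 _.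
exact: class_mass_spread.
Qed.

End Spread.

Lemma lambda_coord00 (R : realFieldType) r1 r2 k1 k2 : lambda_coord R r1 r2 k1 k2 0 0 = 1.
Proof. by rewrite /lambda_coord !ffactn0 mulr1 invr1 mulr1. Qed.

Lemma extendible_in_conv (R : realFieldType) n1 n2 r1 r2 (p : outcome n1 n2 -> R) :
  (n1 <= r1)%N -> (n2 <= r2)%N -> extendible r1 r2 p -> in_conv_lambda n1 n2 r1 r2 (wcoord p).
Proof.
move=> le_nr1 le_nr2 [q [[q_ge0 q_sum1] qD p_marginal]].
exists (fun k1 k2 => class_mass q k1 k2); split=> [k1 k2 | | l1 l2 le_ln1 le_ln2 _].
- by apply: sumr_ge0 => y _; apply: q_ge0.
- by rewrite -sum_by_class.
have -> : wcoord p l1 l2 = wcoord (marginal q : outcome n1 n2 -> R) l1 l2.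
  by apply: eq_bigr => x _; apply: p_marginal.
rewrite (wcoord_marginal le_nr1 le_nr2) //.
exact: wcoord_class_constant (DFPE_class_constant qD)
  (leq_trans le_ln1 le_nr1) (leq_trans le_ln2 le_nr2).
Qed.

(* Sufficiency: spreading the convex weights over the classes gives a DFPE
   law whose marginal has the same w-coordinates as [p] (for (0,0) both are
   total masses); being class-constant, the marginal equals [p]. *)
Lemma in_conv_extendible (R : realFieldType) n1 n2 r1 r2 (p : outcome n1 n2 -> R) :
  (n1 <= r1)%N -> (n2 <= r2)%N -> is_law p -> DFPE p ->
  in_conv_lambda n1 n2 r1 r2 (wcoord p) -> extendible r1 r2 p.
Proof.
move=> le_nr1 le_nr2 [_ p_sum1] pD [c [c_ge0 c_sum1 w_conv]].
have spreadD := class_constant_DFPE (spread_class_constant c).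
exists (spread c); split; [exact: spread_law | exact: spreadD | ].
apply: class_constant_wcoord_inj => [||l1 l2 le_ln1 le_ln2].
- exact: DFPE_class_constant.
- exact/DFPE_class_constant/(DFPE_marginal le_nr1 le_nr2).
rewrite (wcoord_marginal le_nr1 le_nr2) // (wcoord_class_constant (spread_class_constant c)
  (leq_trans le_ln1 le_nr1) (leq_trans le_ln2 le_nr2)).
under eq_bigr do under eq_bigr do rewrite class_mass_spread.
case: (eqVneq (l1, l2) (0%N, 0%N)) => [[-> ->] | /eqP ne00]; last exact: w_conv.
rewrite wcoord00 p_sum1 -c_sum1; apply: eq_bigr => k1 _; apply: eq_bigr => k2 _.
by rewrite lambda_coord00 mulr1.
Qed.

Theorem mainTheorem4 (R : realFieldType) (n1 n2 r1 r2 : nat)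
  (p : outcome n1 n2 -> R) :
  (n1 <= r1)%N -> (n2 <= r2)%N -> is_law p -> DFPE p ->
  (extendible r1 r2 p <-> in_conv_lambda n1 n2 r1 r2 (wcoord p)).
Proof.
move=> le_nr1 le_nr2 p_law pD; split.
- exact: extendible_in_conv.
- exact: in_conv_extendible.
Qed.
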